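(* Let $(\mathfrak{S},\mathfrak{C})$ be an SZLG-system, i.e. $\mathfrak{S}=\{(V_i,W_{i\oplus_3 1}):i\in\{1,2,3\}\}$ and $\mathfrak{C}=\{\{V_i,W_i\}:i\in\{1,2,3\}\}$. Then $$\Delta_0(\mathfrak{C})=\frac12\sum_{i=1}^3|\langle V_i\rangle-\langle W_i\rangle|,\qquad \Delta_{\min}(\mathfrak{S},\mathfrak{C})=\frac12\max\Big(2\Delta_0(\mathfrak{C}),\ \mathsf{s}_{odd}\big(\langle V_iW_{i\oplus_3 1}\rangle:i\in\{1,2,3\}\big)-1\Big).$$ Consequently $$\mathsf{CNTX}(\mathfrak{S},\mathfrak{C})=\frac12\max\Big(0,\ \mathsf{s}_{odd}\big(\langle V_iW_{i\oplus_3 1}\rangle:i\in\{1,2,3\}\big)-1-\sum_{i=1}^3|\langle V_i\rangle-\langle W_i\rangle|\Big),$$ and the system has a noncontextual description if and only if $$\mathsf{s}_{odd}\big(\langle V_iW_{i\oplus_3 1}\rangle:i\in\{1,2,3\}\big)\le 1+\sum_{i=1}^3|\langle V_i\rangle-\langle W_i\rangle|.$$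
   Context: $\oplus_3$ denotes cyclic addition on $\{1,2,3\}$ ($3\oplus_3 1=1$). All $V_i,W_i$ are $\pm1$-valued random variables. Each pair $(V_i,W_{i\oplus_3 1})$ is jointly distributed, but variables in different pairs are stochastically unrelated (have no given joint distribution); in particular $V_i$ and $W_i$ are never jointly distributed. $\langle\cdot\rangle$ denotes expectation; $\langle V_iW_{i\oplus_3 1}\rangle$ is computed from the given joint distribution of the pair. A coupling of random variables $A,B$ is a jointly distributed pair $(A^*,B^* )$ with $A^*\sim A$, $B^*\sim B$; it is maximal if $\Pr[A^*=B^*]$ is the largest possible over all couplings. A coupling $S$ of $\mathfrak{S}$ is a jointly distributed 6-tuple $(V_1^*,V_2^*,V_3^*,W_1^*,W_2^*,W_3^* )$ with $(V_i^*,W_{i\oplus_3 1}^* )$ distributed as $(V_i,W_{i\oplus_3 1})$ for each $i$. The system has a (maximally) noncontextual description if some coupling $S$ has each $(V_i^*,W_i^* )$ a maximal coupling of $V_i,W_i$. $\Delta_0(\mathfrak{C})=\frac12\sum_i|\langle V_i\rangle-\langle W_i\rangle|$; $\Delta_{\min}(\mathfrak{S},\mathfrak{C})$ is the infimum over all couplings $S$ of $\sum_{i=1}^3\Pr[V_i^*\ne W_i^*]$; $\mathsf{CNTX}(\mathfrak{S},\mathfrak{C})=\Delta_{\min}(\mathfrak{S},\mathfrak{C})-\Delta_0(\mathfrak{C})$. For reals $a_1,\ldots,a_m$, $\mathsf{s}_{odd}(a_1,\ldots,a_m)$ is the maximum of $\sum_{i=1}^m(\pm a_i)$ over all sign choices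 with an odd number of minus signs. *)

From mathcomp Require Import all_boot all_order all_algebra.
From mathcomp Require Import classical_sets reals.
Set Implicit Arguments. Unset Strict Implicit. Unset Printing Implicit Defensive.
Import Order.TTheory GRing.Theory Num.Theory.
Local Open Scope ring_scope.
Local Open Scope classical_set_scope.

(* A +-1 valued random variable value is encoded by a bool: true = +1, false = -1. *)
Definition sgn {R : numDomainType} (b : bool) : R := if b then 1 else -1.

(* cyclic successor i (+)_3 1 and predecessor on the index set 'I_3 = {0,1,2}
   (standing for {1,2,3}). *)
Definition nxt (i : 'I_3) : 'I_3 := ordS i.
Definition prv (i : 'I_3) : 'I_3 := ord_pred i.

Definition is_dist {R : numDomainType} {T : finType} (p : {ffun T -> R}) : Prop :=
  (forall x, 0 <= p x) /\ \sum_x p x = 1.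

(* An SZLG system: for each i, p i is the joint distribution of the pair
   (V_i, W_{i (+)_3 1}) on {+-1}^2.  Different pairs are stochastically unrelated. *)
Definition system (R : numDomainType) := 'I_3 -> {ffun bool * bool -> R}.

Section Defs.
Variable R : realType.
Variable p : system R.

(* <V_i>, computed from the pair (V_i, W_{i+1}) *)
Definition EV (i : 'I_3) : R := \sum_x p i x * sgn x.1.
(* <W_i>, computed from the pair (V_{i-1}, W_i) *)
Definition EW (i : 'I_3) : R := \sum_x p (prv i) x * sgn x.2.
Definition EVW (i : 'I_3) : R := \sum_x p i x * (sgn x.1 * sgn x.2).

(* 6-tuples of V_1^*, V_2^*, V_3^*, W_1^*, W_2^*, W_3^* values *)
Definition six := ({ffun 'I_3 -> bool} * {ffun 'I_3 -> bool})%type.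

Definition is_coupling (S : {ffun six -> R}) : Prop :=
  is_dist S /\
  forall (i : 'I_3) (x y : bool),
    \sum_(u : six | (u.1 i == x) && (u.2 (nxt i) == y)) S u = p i (x, y).

Definition Pneq (S : {ffun six -> R}) (i : 'I_3) : R :=
  \sum_(u : six | u.1 i != u.2 i) S u.

Definition margVW (S : {ffun six -> R}) (i : 'I_3) : {ffun bool * bool -> R} :=
  [ffun xy => \sum_(u : six | (u.1 i == xy.1) && (u.2 i == xy.2)) S u].

Definition lawV (i : 'I_3) (x : bool) : R := \sum_y p i (x, y).
Definition lawW (i : 'I_3) (y : bool) : R := \sum_x p (prv i) (x, y).

Definition is_coupling_VW (i : 'I_3) (r : {ffun bool * bool -> R}) : Prop :=
  is_dist r /\ (forall x, \sum_y r (x, y) = lawV i x)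
            /\ (forall y, \sum_x r (x, y) = lawW i y).

Definition Peq (r : {ffun bool * bool -> R}) : R := \sum_x r (x, x).

Definition is_maximal_coupling_VW (i : 'I_3) (r : {ffun bool * bool -> R}) : Prop :=
  is_coupling_VW i r /\ forall r', is_coupling_VW i r' -> Peq r' <= Peq r.

Definition noncontextual : Prop :=
  exists S, is_coupling S /\ forall i, is_maximal_coupling_VW i (margVW S i).

Definition Delta0 : R := 2^-1 * \sum_i `|EV i - EW i|.

Definition Delta_min : R :=
  inf [set d | exists S, is_coupling S /\ d = \sum_i Pneq S i].

Definition CNTX : R := Delta_min - Delta0.

End Defs.

Definition s_odd (R : realType) (m : nat) (a : 'I_m -> R) : R :=
  sup [set x | exists s : {ffun 'I_m -> bool},
          odd #|[set i | s i]| /\ x = \sum_i (if s i then - a i else a i)].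

From mathcomp Require Import all_boot all_order all_algebra.
From mathcomp Require Import classical_sets reals.
From mathcomp Require Import ring lra.
Import Order.TTheory GRing.Theory Num.Theory.
Local Open Scope ring_scope.
Set Implicit Arguments.
Unset Strict Implicit.
Unset Printing Implicit Defensive.

(* Lower bounds: in any coupling P[V_i <> W_i] >= |P[V_i] - P[W_i]|, and the disagreement
   indicators along the cycle V_1 W_2 V_2 W_3 V_3 W_1 obey the triangle inequality and the
   parity constraint, which in expectation give 2 * sum_i P[V_i <> W_i] >= s_odd - 1.
   Upper bound: view d(X, Y) = P[X <> Y] as a semimetric on bits, extended by the constant bit
   false, at distance P[X] from X.  On four points every semimetric satisfying the triangle and
   perimeter inequalities comes from a joint law of bits, so the coupling is glued from laws of
   (W_1, W_2, W_3) and of (W_i, V_i, W_{i+1}), with V_i independent of the rest given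
   (W_i, W_{i+1}).  What remains is to choose the chords e_i = d(W_i, W_{i+1}): with budgets
   c_i >= |P[V_i] - P[W_i]| summing to t, each e_i is confined to an interval, and three such
   intervals meet the triangle inequalities exactly when four linear conditions hold, which
   follow from t >= Delta_0 and 2 t >= s_odd - 1.  Then d(W_i, V_i) can be taken
   max(|P[W_i] - P[V_i]|, |e_i - P[V_i <> W_{i+1}]|) <= c_i. *)

Definition o0 : 'I_3 := @Ordinal 3 0 isT.
Definition o1 : 'I_3 := @Ordinal 3 1 isT.
Definition o2 : 'I_3 := @Ordinal 3 2 isT.

Lemma ord3P (i : 'I_3) : [\/ i = o0, i = o1 | i = o2].
Proof.
case: i => -[|[|[|//]]] ?; [apply: Or31 | apply: Or32 | apply: Or33]; exact: val_inj.
Qed.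

Lemma nxt0 : nxt o0 = o1. Proof. exact: val_inj. Qed.
Lemma nxt1 : nxt o1 = o2. Proof. exact: val_inj. Qed.
Lemma nxt2 : nxt o2 = o0. Proof. exact: val_inj. Qed.
Lemma prv0 : prv o0 = o2. Proof. exact: val_inj. Qed.
Lemma prv1 : prv o1 = o0. Proof. exact: val_inj. Qed.
Lemma prv2 : prv o2 = o1. Proof. exact: val_inj. Qed.
Definition cycE := (nxt0, nxt1, nxt2, prv0, prv1, prv2).

Lemma prv_nxt i : prv (nxt i) = i.
Proof. by case: (ord3P i) => ->; apply: val_inj. Qed.

Lemma nxt_prv i : nxt (prv i) = i.
Proof. by case: (ord3P i) => ->; apply: val_inj. Qed.

Lemma nxt_nxt i : nxt (nxt i) = prv i.
Proof. by case: (ord3P i) => ->; apply: val_inj. Qed.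

Lemma prv_prv i : prv (prv i) = nxt i.
Proof. by case: (ord3P i) => ->; apply: val_inj. Qed.

Section Sums.
Variable V : nmodType.

Lemma sum_ord3 (F : 'I_3 -> V) : \sum_i F i = F o0 + F o1 + F o2.
Proof. by rewrite !big_ord_recr big_ord0 /= add0r; congr (F _ + F _ + F _); apply: val_inj. Qed.

Lemma sum_ord3_at i (F : 'I_3 -> V) : \sum_k F k = F i + F (nxt i) + F (prv i).
Proof.
rewrite sum_ord3; case: (ord3P i) => ->; rewrite !cycE //.
  by rewrite [RHS]addrC addrA.
by rewrite -[RHS]addrA [RHS]addrC.
Qed.

Lemma sum_pairE (A B : finType) (F : A * B -> V) : \sum_t F t = \sum_a \sum_b F (a, b).
Proof. by rewrite pair_bigA; apply: eq_bigr => -[]. Qed.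

Lemma sum_bool_pair (F : bool * bool -> V) :
  \sum_xy F xy = F (true, true) + F (true, false) + F (false, true) + F (false, false).
Proof. by rewrite sum_pairE !big_bool /= addrA. Qed.

Lemma sum_ffun3 (G : bool -> bool -> bool -> V) :
  \sum_(w : {ffun 'I_3 -> bool}) G (w o0) (w o1) (w o2) = \sum_x \sum_y \sum_z G x y z.
Proof.
pose h (t : bool * bool * bool) : {ffun 'I_3 -> bool} :=
  [ffun k : 'I_3 => nth false [:: t.1.1; t.1.2; t.2] k].
have h_bij : bijective h.
  exists (fun w : {ffun 'I_3 -> bool} => (w o0, w o1, w o2)) => [[[x y] z]|w]; rewrite ?ffunE //.
  by apply/ffunP => k; rewrite ffunE; case: (ord3P k) => ->.
rewrite (reindex h) ?sum_pairE; last exact: onW_bij.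
by do 3 (apply: eq_bigr => ? _); rewrite !ffunE.
Qed.

End Sums.

Section BitLaws.
Variable R : realDomainType.
Implicit Types mX mY mZ pXY pXZ pYZ a b c : R.

(* Laws of bits with P[X] = mX, P[X /\ Y] = pXY, etc.; in bit3 the cell P[X /\ Y /\ Z] is
   the least value allowed by the other cells. *)
Definition bit2 mX mY pXY (x y : bool) : R :=
  if x then (if y then pXY else mX - pXY) else (if y then mY - pXY else 1 - mX - mY + pXY).

Lemma bit2C mX mY pXY x y : bit2 mX mY pXY x y = bit2 mY mX pXY y x.
Proof. by case: x; case: y => //=; ring. Qed.

Definition bit3 mX mY mZ pXY pXZ pYZ (x y z : bool) : R :=
  let tau := Num.max (Num.max 0 (pXY + pXZ - mX)) (Num.max (pXY + pYZ - mY) (pXZ + pYZ - mZ)) in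
  if x then
    (if y then (if z then tau else pXY - tau)
     else (if z then pXZ - tau else mX - pXY - pXZ + tau))
  else
    (if y then (if z then pYZ - tau else mY - pXY - pYZ + tau)
     else (if z then mZ - pXZ - pYZ + tau else 1 - mX - mY - mZ + pXY + pXZ + pYZ - tau)).

Section Marginals.
Variables mX mY mZ pXY pXZ pYZ : R.
Let T := bit3 mX mY mZ pXY pXZ pYZ.
Lemma sum_bit3_z x y : \sum_z T x y z = bit2 mX mY pXY x y.
Proof. by rewrite big_bool /T /bit3 /bit2; case: x; case: y => /=; ring. Qed.
Lemma sum_bit3_y x z : \sum_y T x y z = bit2 mX mZ pXZ x z.
Proof. by rewrite big_bool /T /bit3 /bit2; case: x; case: z => /=; ring. Qed.
Lemma sum_bit3_x y z : \sum_x T x y z = bit2 mY mZ pYZ y z.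
Proof. by rewrite big_bool /T /bit3 /bit2; case: y; case: z => /=; ring. Qed.
End Marginals.

(* Distances are disagreement probabilities P[X <> Y]; in cut4 the first three arguments are
   the distances P[X], P[Y], P[Z] to the constant bit false. *)
Definition metric3 a b c : Prop := [/\ a <= b + c, b <= a + c, c <= a + b & a + b + c <= 2].

Definition cut4 dX dY dZ dXY dXZ dYZ : Prop :=
  [/\ metric3 dX dY dXY, metric3 dX dZ dXZ, metric3 dY dZ dYZ & metric3 dXY dXZ dYZ].

(* |a - b| and dmax a b are the least and the largest P[X <> Y] for P[X] = a, P[Y] = b. *)
Definition dmax a b : R := Num.min (a + b) (2 - a - b).

Lemma metric3E a b c : metric3 a b c <-> `|a - b| <= c <= dmax a b.
Proof.
rewrite /metric3 /dmax; split.
  move=> [? ? ? ?]; apply/andP; split; first by apply/ler_normlP; split; lra.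
  by rewrite le_min; apply/andP; split; lra.
by move=> /andP[/ler_normlP[? ?]]; rewrite le_min => /andP[? ?]; split; lra.
Qed.

Lemma dmax_le1 a b : dmax a b <= 1.
Proof. by rewrite /dmax ge_min; case: (leP (a + b) 1) => ?; apply/orP; [left | right]; lra. Qed.

Lemma extreme_dists_triangle x y z : 0 <= x <= 1 -> 0 <= y <= 1 -> 0 <= z <= 1 ->
  [/\ `|x - y| <= dmax x y, dmax x y <= dmax y z + `|z - x|, dmax x y <= `|y - z| + dmax z x,
      `|x - y| + `|y - z| + dmax z x <= 2 & `|x - y| + dmax y z + dmax z x <= 2].
Proof.
move=> /andP[? ?] /andP[? ?] /andP[? ?].
have dmax_le a b : dmax a b <= a + b /\ dmax a b <= 2 - a - b by rewrite /dmax !ge_min !lexx orbT.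
have dmax_cases a b : dmax a b = a + b \/ dmax a b = 2 - a - b by rewrite /dmax; case: leP; auto.
have norm_cases (w : R) : (`|w| = w /\ 0 <= w) \/ (`|w| = - w /\ w <= 0).
  by case: (lerP 0 w) => w0; [left; rewrite ger0_norm | right; rewrite ltr0_norm // ltW].
case: (dmax_le x y) (dmax_le y z) (dmax_le z x) => ? ? [? ?] [? ?].
split.
- by case: (dmax_cases x y) => ->; apply/ler_normlP; split; lra.
- by case: (dmax_cases y z) => ->; case: (norm_cases (z - x)) => -[-> ?]; lra.
- by case: (dmax_cases z x) => ->; case: (norm_cases (y - z)) => -[-> ?]; lra.
- by case: (norm_cases (x - y)) => -[-> ?]; case: (norm_cases (y - z)) => -[-> ?]; lra.
- by case: (norm_cases (x - y)) => -[-> ?]; lra.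
Qed.

Lemma metric3_swap12 a b c : metric3 a b c -> metric3 b a c.
Proof. by case=> *; split; lra. Qed.

Lemma metric3_swap23 a b c : metric3 a b c -> metric3 a c b.
Proof. by case=> *; split; lra. Qed.

Lemma bit3_ge0 mX mY mZ pXY pXZ pYZ :
  cut4 mX mY mZ (mX + mY - 2 * pXY) (mX + mZ - 2 * pXZ) (mY + mZ - 2 * pYZ) ->
  forall x y z, 0 <= bit3 mX mY mZ pXY pXZ pYZ x y z.
Proof.
move=> metric x y z; rewrite /bit3 /=; set tau := Num.max _ _.
have [? ? ? ?] : [/\ 0 <= tau, pXY + pXZ - mX <= tau, pXY + pYZ - mY <= tau
                  & pXZ + pYZ - mZ <= tau] by rewrite !le_max !lexx !orbT.
have [? ? ? ?] : [/\ tau <= pXY, tau <= pXZ, tau <= pYZ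
                  & tau <= 1 - mX - mY - mZ + pXY + pXZ + pYZ].
  case: metric => -[? ? ? ?] [? ? ? ?] [? ? ? ?] [? ? ? ?].
  by split; rewrite !ge_max; apply/andP; split; apply/andP; split; lra.
by case: x; case: y; case: z; lra.
Qed.

Lemma cut4_completion dX dY dZ dXZ dYZ : metric3 dX dZ dXZ -> metric3 dY dZ dYZ ->
  cut4 dX dY dZ (Num.max `|dX - dY| `|dXZ - dYZ|) dXZ dYZ.
Proof.
move=> [? ? ? ?] [? ? ? ?]; set d := Num.max _ _.
have [/ler_normlP[? ?] /ler_normlP[? ?]] : `|dX - dY| <= d /\ `|dXZ - dYZ| <= d.
  by rewrite !le_max !lexx !orbT.
have d_le v : `|dX - dY| <= v -> `|dXZ - dYZ| <= v -> d <= v.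
  by move=> ? ?; rewrite ge_max; apply/andP.
have [? ? ? ?] : [/\ d <= dX + dY, d <= 2 - dX - dY, d <= dXZ + dYZ & d <= 2 - dXZ - dYZ].
  by split; apply: d_le; apply/ler_normlP; split; lra.
by split => //; split; lra.
Qed.

Lemma metric3_box l1 l2 l3 u1 u2 u3 :
  0 <= l1 <= u1 -> 0 <= l2 <= u2 -> 0 <= l3 <= u3 -> u1 <= 1 -> u2 <= 1 -> u3 <= 1 ->
  l1 <= u2 + u3 -> l2 <= u1 + u3 -> l3 <= u1 + u2 -> l1 + l2 + l3 <= 2 ->
  exists e1 e2 e3, [/\ l1 <= e1 <= u1, l2 <= e2 <= u2, l3 <= e3 <= u3 & metric3 e1 e2 e3].
Proof.
move=> /andP[? ?] /andP[? ?] /andP[? ?] *.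
(* Fourier-Motzkin: each e_k is the least value compatible with the earlier choices. *)
pose e1 := Num.max l1 (Num.max (l2 - u3) (l3 - u2)).
have [? ? ?] : [/\ l1 <= e1, l2 - u3 <= e1 & l3 - u2 <= e1] by rewrite !le_max !lexx !orbT.
have [? ? ?] : [/\ e1 <= u1, e1 <= u2 + u3 & e1 <= 2 - l2 - l3].
  by split; rewrite !ge_max; apply/and3P; split; lra.
pose e2 := Num.max l2 (Num.max (l3 - e1) (e1 - u3)).
have [? ? ?] : [/\ l2 <= e2, l3 - e1 <= e2 & e1 - u3 <= e2] by rewrite !le_max !lexx !orbT.
have [? ? ?] : [/\ e2 <= u2, e2 <= e1 + u3 & e2 <= 2 - l3 - e1].
  by split; rewrite !ge_max; apply/and3P; split; lra.
pose e3 := Num.max l3 (Num.max (e1 - e2) (e2 - e1)).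
have [? ? ?] : [/\ l3 <= e3, e1 - e2 <= e3 & e2 - e1 <= e3] by rewrite !le_max !lexx !orbT.
have [? ? ?] : [/\ e3 <= u3, e3 <= e1 + e2 & e3 <= 2 - e1 - e2].
  by split; rewrite !ge_max; apply/and3P; split; lra.
exists e1, e2, e3; split; try by apply/andP.
by split; lra.
Qed.

End BitLaws.

Section Indicators.
Variable R : nzRingType.

Lemma sum_bool2_indicator (F : bool -> bool -> R) a b :
  \sum_x \sum_y F x y * ((a == x) && (b == y))%:R = F a b.
Proof. by rewrite !big_bool; case: a; case: b; rewrite /= ?mulr1 ?mulr0 ?addr0 ?add0r. Qed.

Lemma sum_pushforward (T : finType) (S : T -> R) (g h : T -> bool) (F : bool -> bool -> R) :
  \sum_u S u * F (g u) (h u) = \sum_x \sum_y (\sum_(u | (g u == x) && (h u == y)) S u) * F x y.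
Proof.
under eq_bigr => u _ do rewrite -(sum_bool2_indicator F (g u) (h u)) mulr_sumr.
rewrite exchange_big; apply: eq_bigr => x _; under eq_bigr => u _ do rewrite mulr_sumr.
rewrite exchange_big; apply: eq_bigr => y _; symmetry.
rewrite mulr_suml big_mkcond; apply: eq_bigr => u _.
by case: (_ && _); rewrite ?mulr1 ?mulr0.
Qed.

Lemma sum_bool_indicator (F : bool -> R) x : \sum_a F a * (a == x)%:R = F x.
Proof. by rewrite big_bool; case: x; rewrite /= ?mulr1 ?mulr0 ?addr0 ?add0r. Qed.

End Indicators.

Section StarGluing.
Variable R : numFieldType.

Variable Q : {ffun 'I_3 -> bool} -> R.
Variable T : 'I_3 -> bool -> bool -> bool -> R.
Hypothesis Q_ge0 : forall w, 0 <= Q w.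
Hypothesis T_ge0 : forall i x v y, 0 <= T i x v y.
Let TW i x y := \sum_v T i x v y.
Hypothesis Q_pair : forall i (g : bool -> bool -> R),
  \sum_w Q w * g (w i) (w (nxt i)) = \sum_x \sum_y TW i x y * g x y.

(* W is drawn from Q, then each V_i independently from T i given (W_i, W_{i+1}).  Where TW
   vanishes, so does Q (Q_eq0), which makes the division by 0 harmless. *)
Definition star_glue : {ffun six -> R} :=
  [ffun u : six => Q u.2 * \prod_i (T i (u.2 i) (u.1 i) (u.2 (nxt i)) / TW i (u.2 i) (u.2 (nxt i)))].

Lemma star_glue_ge0 u : 0 <= star_glue u.
Proof.
rewrite ffunE mulr_ge0 // prodr_ge0 // => j _.
by rewrite divr_ge0 // sumr_ge0.
Qed.

Let Q_eq0 (w : {ffun 'I_3 -> bool}) i : TW i (w i) (w (nxt i)) = 0 -> Q w = 0.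
Proof.
move=> TW0; have := Q_pair i (fun x y => ((w i == x) && (w (nxt i) == y))%:R).
rewrite sum_bool2_indicator TW0 => /psumr_eq0P/(_ w isT).
by rewrite !eqxx mulr1; apply => w' _; rewrite mulr_ge0.
Qed.

Let TW_mul_div i x v y : TW i x y * (T i x v y / TW i x y) = T i x v y.
Proof.
have [TW0|TWn0] := eqVneq (TW i x y) 0; last by rewrite mulrC divfK.
by rewrite TW0 mul0r; apply/esym/(psumr_eq0P (fun v _ => T_ge0 i x v y) TW0).
Qed.

Let sum_star_glue_V (w : {ffun 'I_3 -> bool}) i (G : bool -> R) :
  \sum_v star_glue (v, w) * G (v i) =
  Q w * \sum_b (T i (w i) b (w (nxt i)) / TW i (w i) (w (nxt i))) * G b.
Proof.
have [Q0|Qn0] := eqVneq (Q w) 0.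
  by rewrite Q0 mul0r big1 // => v _; rewrite ffunE /= Q0 !mul0r.
pose k j b := T j (w j) b (w (nxt j)) / TW j (w j) (w (nxt j)).
pose k' j b := k j b * (if j == i then G b else 1).
have k_sum1 j : \sum_b k j b = 1.
  rewrite -mulr_suml divff //; apply/eqP => TW0; move/eqP: Qn0; apply.
  exact: Q_eq0 TW0.
transitivity (Q w * \prod_j \sum_b k' j b).
  rewrite bigA_distr_bigA /= mulr_sumr; apply: eq_bigr => v _.
  rewrite ffunE /= -mulrA; congr (_ * _).
  rewrite /k' [RHS]big_split /=; congr (_ * _).
  by rewrite (bigD1 i) //= eqxx big1 ?mulr1 // => j /negbTE ->.
rewrite (bigD1 i) //=.
have -> : \prod_(j | j != i) \sum_b k' j b = 1.
  by apply: big1 => j ji; rewrite -(k_sum1 j); apply: eq_bigr => b _; rewrite /k' (negbTE ji) mulr1.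
by rewrite mulr1 /k'; under eq_bigr do rewrite eqxx.
Qed.

Lemma star_glueE i (F : bool -> bool -> bool -> R) :
  \sum_u star_glue u * F (u.2 i) (u.1 i) (u.2 (nxt i)) =
  \sum_x \sum_v \sum_y T i x v y * F x v y.
Proof.
transitivity (\sum_w \sum_v star_glue (v, w) * F (w i) (v i) (w (nxt i))).
  by rewrite exchange_big pair_bigA; apply: eq_bigr => -[].
under eq_bigr => w _ do rewrite (sum_star_glue_V w i (fun b => F (w i) b (w (nxt i)))).
rewrite (Q_pair i (fun x y => \sum_b T i x b y / TW i x y * F x b y)).
apply: eq_bigr => x _; rewrite [RHS]exchange_big; apply: eq_bigr => y _.
by rewrite mulr_sumr; apply: eq_bigr => v _; rewrite mulrA TW_mul_div.
Qed.
End StarGluing.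

Section Chords.
Variable R : realDomainType.
Variables a b f c : 'I_3 -> R.
Hypothesis pair_metric : forall i, metric3 (a i) (b (nxt i)) (f i).
Hypothesis c_ge : forall i, `|a i - b i| <= c i.
Hypothesis c_ge_cycle : forall i, f i - f (nxt i) - f (prv i) <= \sum_k c k.
Hypothesis c_ge_cycle_sum : \sum_k f k - 2 <= \sum_k c k.

(* Read a i = P[V_i], b i = P[W_i], f i = P[V_i <> W_{i+1}], and c i as a budget for
   P[W_i <> V_i].  The triangle (false, W_i, W_{i+1}) and |e_i - f_i| <= c_i confine the
   chord e_i = P[W_i <> W_{i+1}] to the interval [l i, u i]. *)
Let l i := Num.max `|b i - b (nxt i)| (f i - c i).
Let u i := Num.min (dmax (b i) (b (nxt i))) (f i + c i).

Let b_bound i : 0 <= b i <= 1.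
Proof. by case: (pair_metric (prv i)); rewrite nxt_prv => *; apply/andP; split; lra. Qed.

Let budget_box i : `|b i - b (nxt i)| <= f i + c i /\ f i - c i <= dmax (b i) (b (nxt i)).
Proof.
case: (pair_metric i) => ? ? ? ?; move/ler_normlP: (c_ge i) => [? ?].
by split; [apply/ler_normlP | rewrite /dmax le_min; apply/andP]; split; lra.
Qed.

Let W_bounds i := extreme_dists_triangle (b_bound i) (b_bound (nxt i)) (b_bound (prv i)).

Let l_ge i : `|b i - b (nxt i)| <= l i /\ f i - c i <= l i.
Proof. by rewrite /l !le_max !lexx !orbT. Qed.

Let u_le i : u i <= dmax (b i) (b (nxt i)) /\ u i <= f i + c i.
Proof. by rewrite /u ge_min lexx ge_min lexx orbT. Qed.

Let box_nonempty i : [/\ 0 <= l i, l i <= u i & u i <= 1].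
Proof.
have c_ge0 : 0 <= c i := le_trans (normr_ge0 _) (c_ge i).
case: (budget_box i) (W_bounds i) => ? ? [? _ _ _ _].
split; first by rewrite le_max normr_ge0.
  rewrite /l /u; case: (leP (dmax (b i) (b (nxt i))) (f i + c i)) => _;
  by rewrite ge_max; apply/andP; split; lra.
by rewrite ge_min dmax_le1.
Qed.

Let box_triangle i : l i <= u (nxt i) + u (prv i).
Proof.
case: (W_bounds i) => _ ? ? _ _.
move: (W_bounds (nxt i)) (W_bounds (prv i)); rewrite nxt_nxt prv_nxt nxt_prv prv_prv.
move=> [? _ _ _ _] [? _ _ _ _].
move: (budget_box i) (budget_box (nxt i)) (budget_box (prv i)); rewrite nxt_nxt nxt_prv.
move=> [? ?] [? ?] [? ?]; have := c_ge_cycle i; rewrite (sum_ord3_at i) => ?.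
have := ler_distD (b (prv i)) (b i) (b (nxt i)).
rewrite (distrC (b i) (b (prv i))) (distrC (b (prv i)) (b (nxt i))) => ?.
rewrite /l /u nxt_nxt nxt_prv ge_max.
case: (leP (dmax (b (nxt i)) (b (prv i))) (f (nxt i) + c (nxt i))) => _;
case: (leP (dmax (b (prv i)) (b i)) (f (prv i) + c (prv i))) => _;
by apply/andP; split; lra.
Qed.

Let box_perimeter i : l i + l (nxt i) + l (prv i) <= 2.
Proof.
move: (W_bounds i) (W_bounds (nxt i)) (W_bounds (prv i)).
rewrite nxt_nxt prv_nxt nxt_prv prv_prv => -[_ _ _ ? ?] [_ _ _ ? ?] [? _ _ ? ?].
move: (budget_box i) (budget_box (nxt i)) (budget_box (prv i)); rewrite nxt_nxt nxt_prv.
move=> [_ ?] [_ ?] [_ ?]; have := c_ge_cycle_sum; rewrite !(sum_ord3_at i) => ?.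
rewrite /l nxt_nxt nxt_prv.
case: (leP `|b i - b (nxt i)| (f i - c i)) => _;
case: (leP `|b (nxt i) - b (prv i)| (f (nxt i) - c (nxt i))) => _;
by case: (leP `|b (prv i) - b i| (f (prv i) - c (prv i))) => _; lra.
Qed.

Lemma cycle_chords : exists e : 'I_3 -> R,
  [/\ forall i, metric3 (b i) (b (nxt i)) (e i), metric3 (e o0) (e o1) (e o2)
    & forall i, `|e i - f i| <= c i].
Proof.
have [e0 [e1 [e2 [e0_in e1_in e2_in e_metric]]]] : exists e0 e1 e2,
    [/\ l o0 <= e0 <= u o0, l o1 <= e1 <= u o1, l o2 <= e2 <= u o2 & metric3 e0 e1 e2].
  case: (box_nonempty o0) (box_nonempty o1) (box_nonempty o2) => [? ? ?] [? ? ?] [? ? ?].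
  have := box_triangle o0; have := box_triangle o1; have := box_triangle o2.
  have := box_perimeter o0; rewrite !cycE => *.
  by apply: metric3_box; rewrite ?(rwP andP) //; lra.
pose e k := nth 0 [:: e0; e1; e2] k.
exists e; split => // k; have /andP[? ?] : l k <= e k <= u k by case: (ord3P k) => ->.
  by case: (l_ge k) (u_le k) => ? ? [? ?]; apply/metric3E/andP; split; lra.
by case: (l_ge k) (u_le k) => ? ? [? ?]; apply/ler_normlP; split; lra.
Qed.

End Chords.

Section System.
Variable R : realType.
Variable p : system R.
Hypothesis p_dist : forall i, is_dist (p i).

Definition pV i := lawV p i true.
Definition pW i := lawW p i true.
Definition dVW i := p i (true, false) + p i (false, true).

Lemma p_ge0 i xy : 0 <= p i xy.
Proof. by case: (p_dist i). Qed.

Lemma p_sum i : p i (true, true) + p i (true, false) + p i (false, true) + p i (false, false) = 1.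
Proof. by case: (p_dist i) => _; rewrite sum_bool_pair. Qed.

Lemma pVE i : pV i = p i (true, true) + p i (true, false).
Proof. by rewrite /pV /lawV big_bool. Qed.

Lemma pW_nxtE i : pW (nxt i) = p i (true, true) + p i (false, true).
Proof. by rewrite /pW /lawW prv_nxt big_bool. Qed.

Lemma pairE i x y : p i (x, y) = bit2 (pV i) (pW (nxt i)) (p i (true, true)) x y.
Proof. by rewrite pVE pW_nxtE /bit2; have := p_sum i; case: x; case: y => /=; lra. Qed.

Lemma pair_metric i : metric3 (pV i) (pW (nxt i)) (dVW i).
Proof.
rewrite pVE pW_nxtE /dVW; have := p_sum i.
have := p_ge0 i (true, true); have := p_ge0 i (true, false).
have := p_ge0 i (false, true); have := p_ge0 i (false, false).
by move=> *; split; lra.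
Qed.

Lemma lawVE i x : lawV p i x = if x then pV i else 1 - pV i.
Proof. by rewrite pVE /lawV big_bool; have := p_sum i; case: x => /=; lra. Qed.

Lemma lawWE i y : lawW p i y = if y then pW i else 1 - pW i.
Proof.
rewrite /pW /lawW !big_bool; have := p_sum (prv i).
by case: y => /=; lra.
Qed.

Lemma pV_bound i : 0 <= pV i <= 1.
Proof. by case: (pair_metric i) => *; apply/andP; split; lra. Qed.

Lemma pW_bound i : 0 <= pW i <= 1.
Proof. by case: (pair_metric (prv i)); rewrite nxt_prv => *; apply/andP; split; lra. Qed.

Definition max_coupling i : {ffun bool * bool -> R} :=
  [ffun xy => bit2 (pV i) (pW i) (Num.min (pV i) (pW i)) xy.1 xy.2].

Lemma max_couplingP i :
  is_coupling_VW p i (max_coupling i) /\ Peq (max_coupling i) = 1 - `|pV i - pW i|.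
Proof.
case/andP: (pV_bound i) (pW_bound i) => ? ? /andP[? ?].
have [[? m_eq n_eq]|[? m_eq n_eq]] :
    [/\ pV i <= pW i, Num.min (pV i) (pW i) = pV i & `|pV i - pW i| = pW i - pV i]
    \/ [/\ pW i <= pV i, Num.min (pV i) (pW i) = pW i & `|pV i - pW i| = pV i - pW i].
  case: (leP (pV i) (pW i)) => h; [left | right]; split => //; try exact: ltW.
    by rewrite distrC ger0_norm // subr_ge0.
  by rewrite ger0_norm // subr_ge0 ltW.
all: rewrite n_eq; (split; [split; [split|split] | ]).
all: try (move=> [x y]; rewrite ffunE m_eq /bit2 /=; case: x; case: y; lra).
all: try (rewrite sum_bool_pair !ffunE m_eq /bit2 /=; lra).
all: try (by move=> x; rewrite lawVE big_bool !ffunE m_eq /bit2; case: x => /=; lra).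
all: try (by move=> y; rewrite lawWE big_bool !ffunE m_eq /bit2; case: y => /=; lra).
all: by rewrite /Peq big_bool !ffunE m_eq /bit2 /=; lra.
Qed.

Lemma Peq_le i r : is_coupling_VW p i r -> Peq r <= 1 - `|pV i - pW i|.
Proof.
move=> [[r_ge0 r_sum] [rV rW]]; move: (rV true) (rW true) r_sum.
rewrite lawVE lawWE sum_bool_pair /Peq !big_bool /= => <- <- r_sum.
have := r_ge0 (true, false); have := r_ge0 (false, true) => ? ?.
have : `|r (true, true) + r (true, false) - (r (true, true) + r (false, true))|
         <= r (true, false) + r (false, true) by apply/ler_normlP; split; lra.
lra.
Qed.

Section Couplings.
Variable S : {ffun six -> R}.
Hypothesis S_coupling : is_coupling p S.

Lemma coupling_ge0 u : 0 <= S u.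
Proof. by case: S_coupling => -[]. Qed.

Lemma coupling_sum1 : \sum_u S u = 1.
Proof. by case: S_coupling => -[]. Qed.

Lemma coupling_pairE i (F : bool -> bool -> R) :
  \sum_u S u * F (u.1 i) (u.2 (nxt i)) = \sum_x \sum_y p i (x, y) * F x y.
Proof.
rewrite sum_pushforward; apply: eq_bigr => x _; apply: eq_bigr => y _.
by case: S_coupling => _ ->.
Qed.

Lemma PneqE i : Pneq S i = \sum_u S u * (u.1 i != u.2 i)%:R.
Proof. by rewrite /Pneq big_mkcond; apply: eq_bigr => u _; case: ifP; rewrite ?mulr1 ?mulr0. Qed.

Lemma dVW_coupling i : dVW i = \sum_u S u * (u.1 i != u.2 (nxt i))%:R.
Proof. by rewrite (coupling_pairE i (fun x y => (x != y)%:R)) !big_bool /dVW /= !mulr1 !mulr0 add0r addr0. Qed.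

Lemma pV_coupling i : pV i = \sum_u S u * (u.1 i)%:R.
Proof. by rewrite (coupling_pairE i (fun x _ => x%:R)) pVE !big_bool /= !mulr1 !mulr0 !addr0. Qed.

Lemma pW_coupling i : pW i = \sum_u S u * (u.2 i)%:R.
Proof.
have := coupling_pairE (prv i) (fun _ y => y%:R); rewrite nxt_prv => ->.
by rewrite /pW /lawW !big_bool /= !mulr1 !mulr0 !addr0.
Qed.

Lemma dist_le_Pneq i : `|pV i - pW i| <= Pneq S i.
Proof.
rewrite pV_coupling pW_coupling PneqE -sumrB; apply: le_trans (ler_norm_sum _ _ _) _.
apply: ler_sum => u _; rewrite -mulrBr normrM ger0_norm ?coupling_ge0 //.
apply: ler_wpM2l; first exact: coupling_ge0.
by case: (u.1 i); case: (u.2 i); rewrite /= ?subrr ?normr0 ?subr0 ?sub0r ?normrN ?normr1.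
Qed.

Lemma cycle_le_Pneq i : dVW i - dVW (nxt i) - dVW (prv i) <= \sum_k Pneq S k.
Proof.
rewrite (sum_ord3_at i) !PneqE !dVW_coupling -!sumrB -!big_split /=.
apply: ler_sum => u _; rewrite -!mulrBr -!mulrDr; apply: ler_wpM2l; first exact: coupling_ge0.
rewrite nxt_nxt nxt_prv.
by case: (u.1 i); case: (u.1 (nxt i)); case: (u.1 (prv i));
   case: (u.2 i); case: (u.2 (nxt i)); case: (u.2 (prv i)); rewrite /=; lra.
Qed.

Lemma cycle_sum_le_Pneq : \sum_k dVW k - 2 <= \sum_k Pneq S k.
Proof.
have two : \sum_u S u * 2 = 2 by rewrite -mulr_suml coupling_sum1 mul1r.
rewrite !sum_ord3 !PneqE !dVW_coupling !cycE -two -!big_split -sumrB /=.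
apply: ler_sum => u _; rewrite -!mulrDr -!mulrBr; apply: ler_wpM2l; first exact: coupling_ge0.
by case: (u.1 o0); case: (u.1 o1); case: (u.1 o2);
   case: (u.2 o0); case: (u.2 o1); case: (u.2 o2); rewrite /=; lra.
Qed.

Lemma margVWE i (F : bool -> bool -> R) :
  \sum_x \sum_y margVW S i (x, y) * F x y = \sum_u S u * F (u.1 i) (u.2 i).
Proof. by rewrite sum_pushforward; apply: eq_bigr => x _; apply: eq_bigr => y _; rewrite ffunE. Qed.

Lemma Peq_margVW i : Peq (margVW S i) = 1 - Pneq S i.
Proof.
rewrite /Peq big_bool PneqE -{1}coupling_sum1 -sumrB.
have := margVWE i (fun x y => (x == y)%:R); rewrite !big_bool /= !mulr1 !mulr0 addr0 add0r => ->.
by apply: eq_bigr => u _; case: (u.1 i); case: (u.2 i); rewrite /= ?mulr1 ?mulr0 ?subr0 ?subrr.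
Qed.

Lemma margVW_coupling i : is_coupling_VW p i (margVW S i).
Proof.
split; [split | split].
- by move=> xy; rewrite ffunE; apply: sumr_ge0 => u _; apply: coupling_ge0.
- have := margVWE i (fun _ _ => 1); rewrite sum_bool_pair !big_bool /= !mulr1 !addrA => ->.
  by rewrite -[RHS]coupling_sum1; apply: eq_bigr => u _; rewrite mulr1.
- move=> x; have := margVWE i (fun a _ => (a == x)%:R).
  under eq_bigr do rewrite -big_distrl /=; rewrite sum_bool_indicator => ->.
  rewrite (coupling_pairE i (fun a _ => (a == x)%:R)).
  by under eq_bigr do rewrite -big_distrl /=; rewrite sum_bool_indicator.
- move=> y; have := margVWE i (fun _ b => (b == y)%:R); rewrite exchange_big /=.
  under eq_bigr do rewrite -big_distrl /=; rewrite sum_bool_indicator => ->.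
  have := coupling_pairE (prv i) (fun _ b => (b == y)%:R); rewrite nxt_prv => ->.
  by rewrite exchange_big /=; under eq_bigr do rewrite -big_distrl /=; rewrite sum_bool_indicator.
Qed.

Lemma maximal_margVW i : is_maximal_coupling_VW p i (margVW S i) <-> Pneq S i <= `|pV i - pW i|.
Proof.
rewrite /is_maximal_coupling_VW Peq_margVW; split.
  by case: (max_couplingP i) => max_cpl max_Peq [_ /(_ _ max_cpl)]; rewrite max_Peq; lra.
by move=> Pneq_le; split => [|r /Peq_le]; [exact: margVW_coupling | lra].
Qed.

End Couplings.

Lemma noncontextualE :
  noncontextual p <-> exists S, is_coupling p S /\ forall i, Pneq S i <= `|pV i - pW i|.
Proof.
by split=> -[S [S_cpl S_max]]; exists S; split => // i;
  apply/(maximal_margVW S_cpl); apply: S_max.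
Qed.

End System.

Section Construction.
Variable R : realType.
Variable p : system R.
Hypothesis p_dist : forall i, is_dist (p i).

(* P[X /\ Y] in terms of P[X], P[Y] and P[X <> Y]. *)
Definition meet (mX mY d : R) := (mX + mY - d) / 2.

Lemma dist_meet mX mY d : mX + mY - 2 * meet mX mY d = d.
Proof. by rewrite /meet; lra. Qed.

Let pair_dist i : pV p i + pW p (nxt i) - 2 * p i (true, true) = dVW p i.
Proof. by rewrite pVE pW_nxtE /dVW; lra. Qed.

Section Glue.
Variable e : 'I_3 -> R.
Hypothesis W_metric : forall i, metric3 (pW p i) (pW p (nxt i)) (e i).
Hypothesis e_metric : metric3 (e o0) (e o1) (e o2).

(* e i is the chord P[W_i <> W_{i+1}]; T i is the law of (W_i, V_i, W_{i+1}), Q that of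
   (W_1, W_2, W_3), and dWV i the resulting P[W_i <> V_i]. *)
Definition dWV i := Num.max `|pW p i - pV p i| `|e i - dVW p i|.

Let n i := meet (pW p i) (pW p (nxt i)) (e i).
Let T i := bit3 (pW p i) (pV p i) (pW p (nxt i)) (meet (pW p i) (pV p i) (dWV i)) (n i) (p i (true, true)).
Let Q (w : {ffun 'I_3 -> bool}) :=
  bit3 (pW p o0) (pW p o1) (pW p o2) (n o0) (n o2) (n o1) (w o0) (w o1) (w o2).

Let T_ge0 i x v y : 0 <= T i x v y.
Proof.
apply: bit3_ge0; rewrite /n !dist_meet pair_dist.
exact: cut4_completion (W_metric i) (pair_metric p_dist i).
Qed.

Let Q_ge0 w : 0 <= Q w.
Proof.
apply: bit3_ge0; rewrite /n !cycE !dist_meet (addrC (pW p o0)) dist_meet.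
have := W_metric o0; have := W_metric o1; have := W_metric o2; rewrite !cycE => ? ? ?.
by split => //; [apply: metric3_swap12 | apply: metric3_swap23].
Qed.

Let Q_pair i (g : bool -> bool -> R) :
  \sum_w Q w * g (w i) (w (nxt i)) = \sum_x \sum_y (\sum_v T i x v y) * g x y.
Proof.
pose B := bit3 (pW p o0) (pW p o1) (pW p o2) (n o0) (n o2) (n o1).
case: (ord3P i) => ->; rewrite !cycE.
- rewrite (sum_ffun3 (fun x y z => B x y z * g x y)).
  apply: eq_bigr => x _; apply: eq_bigr => y _.
  by rewrite -big_distrl /= sum_bit3_z sum_bit3_y !cycE.
- rewrite (sum_ffun3 (fun x y z => B x y z * g y z)) exchange_big.
  apply: eq_bigr => y _; rewrite exchange_big; apply: eq_bigr => z _.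
  by rewrite -big_distrl /= sum_bit3_x sum_bit3_y !cycE.
- rewrite (sum_ffun3 (fun x y z => B x y z * g z x)).
  transitivity (\sum_x \sum_z bit2 (pW p o0) (pW p o2) (n o2) x z * g z x).
    apply: eq_bigr => x _; rewrite exchange_big; apply: eq_bigr => z _.
    by rewrite -big_distrl /= sum_bit3_y.
  rewrite exchange_big; apply: eq_bigr => z _; apply: eq_bigr => x _.
  by rewrite sum_bit3_y bit2C !cycE.
Qed.

Let S := star_glue Q T.

Let S_pairE i (F : bool -> bool -> R) :
  \sum_u S u * F (u.1 i) (u.2 (nxt i)) = \sum_v \sum_y p i (v, y) * F v y.
Proof.
rewrite (star_glueE Q_ge0 T_ge0 Q_pair i (fun _ v y => F v y)) exchange_big /=.
apply: eq_bigr => v _; rewrite exchange_big; apply: eq_bigr => y _.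
by rewrite -big_distrl /= sum_bit3_x -(pairE p_dist).
Qed.

Let S_VWE i (F : bool -> bool -> R) :
  \sum_u S u * F (u.2 i) (u.1 i) =
  \sum_x \sum_v bit2 (pW p i) (pV p i) (meet (pW p i) (pV p i) (dWV i)) x v * F x v.
Proof.
rewrite (star_glueE Q_ge0 T_ge0 Q_pair i (fun x v _ => F x v)).
by apply: eq_bigr => x _; apply: eq_bigr => v _; rewrite -big_distrl /= sum_bit3_z.
Qed.

Let S_coupling : is_coupling p S.
Proof.
split; first split.
- exact: star_glue_ge0.
- transitivity (\sum_u S u * 1); first by apply: eq_bigr => u _; rewrite mulr1.
  rewrite (S_pairE o0 (fun _ _ => 1)).
  under eq_bigr do under eq_bigr do rewrite mulr1.
  by rewrite -sum_pairE; case: (p_dist o0).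
- move=> i x y.
  transitivity (\sum_u S u * ((x == u.1 i) && (y == u.2 (nxt i)))%:R).
    rewrite big_mkcond; apply: eq_bigr => u _; rewrite (eq_sym x) (eq_sym y).
    by case: (_ && _); rewrite ?mulr1 ?mulr0.
  by rewrite (S_pairE i (fun a b => ((x == a) && (y == b))%:R)) sum_bool2_indicator.
Qed.

Lemma glued_coupling : exists S, is_coupling p S /\ forall i, Pneq S i = dWV i.
Proof.
exists S; split => // i; rewrite PneqE (S_VWE i (fun x v => (v != x)%:R)) !big_bool /=.
have := dist_meet (pW p i) (pV p i) (dWV i); rewrite /bit2; lra.
Qed.

End Glue.

Lemma coupling_cost_le t :
  \sum_i `|pV p i - pW p i| <= t ->
  (forall i, dVW p i - dVW p (nxt i) - dVW p (prv i) <= t) ->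
  \sum_i dVW p i - 2 <= t ->
  exists S, is_coupling p S /\ \sum_i Pneq S i <= t.
Proof.
move=> t_ge_dist t_ge_cycle t_ge_cycle_sum.
pose c i := `|pV p i - pW p i| + (t - \sum_k `|pV p k - pW p k|) / 3.
have sum_c : \sum_i c i = t by rewrite /c !sum_ord3; lra.
have c_ge i : `|pV p i - pW p i| <= c i by rewrite /c; lra.
have c_cycle i : dVW p i - dVW p (nxt i) - dVW p (prv i) <= \sum_k c k by rewrite sum_c.
have c_cycle_sum : \sum_k dVW p k - 2 <= \sum_k c k by rewrite sum_c.
have [e [W_metric e_metric e_le]] := cycle_chords (pair_metric p_dist) c_ge c_cycle c_cycle_sum.
have [S [S_cpl S_Pneq]] := glued_coupling W_metric e_metric.
exists S; split => //; rewrite -sum_c; apply: ler_sum => i _; rewrite S_Pneq ge_max distrC c_ge.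
exact: e_le.
Qed.

End Construction.

Lemma card_set_ord3 (s : {ffun 'I_3 -> bool}) :
  #|[set i | s i]%classic| = (s o0 + s o1 + s o2)%N.
Proof.
have mem_s (i : 'I_3) : (i \in [set j | s j]%classic) = s i.
  by apply/idP/idP => [/set_mem | ?]; last exact: mem_set.
by rewrite -sum1_card big_mkcond sum_ord3 /= !mem_s; case: (s o0); case: (s o1); case: (s o2).
Qed.

Lemma s_odd3E (R : realType) (a : 'I_3 -> R) :
  s_odd a = Num.max (Num.max (- a o0 + a o1 + a o2) (a o0 - a o1 + a o2))
                    (Num.max (a o0 + a o1 - a o2) (- a o0 - a o1 - a o2)).
Proof.
rewrite /s_odd; set M := Num.max _ _; set E := (X in sup X).
have [? ? ? ?] : [/\ - a o0 + a o1 + a o2 <= M, a o0 - a o1 + a o2 <= M,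
  a o0 + a o1 - a o2 <= M & - a o0 - a o1 - a o2 <= M] by rewrite !le_max !lexx !orbT.
have E_le_M x : E x -> x <= M.
  move=> [s [+ ->]]; rewrite card_set_ord3 sum_ord3.
  by case: (s o0); case: (s o1); case: (s o2) => //= _; lra.
have E_sign (b0 b1 b2 : bool) : odd (b0 + b1 + b2)%N ->
    E ((if b0 then - a o0 else a o0) + (if b1 then - a o1 else a o1) + (if b2 then - a o2 else a o2)).
  move=> odd_b; exists [ffun k : 'I_3 => nth false [:: b0; b1; b2] k].
  by split; [rewrite card_set_ord3 !ffunE; exact: odd_b | rewrite sum_ord3 !ffunE].
have E_ub : has_ubound E by exists M.
apply/le_anti/andP; split.
  by apply: ge_sup E_le_M; exists (- a o0 + a o1 + a o2); exact: (E_sign true false false isT).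
have := ub_le_sup E_ub (E_sign true false false isT).
have := ub_le_sup E_ub (E_sign false true false isT).
have := ub_le_sup E_ub (E_sign false false true isT).
have := ub_le_sup E_ub (E_sign true true true isT).
by rewrite /M /= !ge_max => *; apply/andP; split; apply/andP; split; lra.
Qed.

Section Main.
Variable R : realType.
Variable p : system R.
Hypothesis p_dist : forall i, is_dist (p i).

Lemma EV_sub_EW i : `|EV p i - EW p i| = 2 * `|pV p i - pW p i|.
Proof.
have -> : EV p i - EW p i = 2 * (pV p i - pW p i).
  rewrite /EV /EW !sum_bool_pair /sgn /= pVE /pW /lawW big_bool /=.
  by have := p_sum p_dist i; have := p_sum p_dist (prv i); lra.
by rewrite normrM ger0_norm.
Qed.

Lemma Delta0E : Delta0 p = \sum_i `|pV p i - pW p i|.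
Proof. by rewrite /Delta0 (eq_bigr _ (fun i _ => EV_sub_EW i)) -mulr_sumr; lra. Qed.

Lemma EVWE i : EVW p i = 1 - 2 * dVW p i.
Proof. by rewrite /EVW sum_bool_pair /sgn /dVW /=; have := p_sum p_dist i; lra. Qed.

Lemma cycle_le_s_odd i : 1 + 2 * (dVW p i - dVW p (nxt i) - dVW p (prv i)) <= s_odd (EVW p).
Proof.
rewrite s_odd3E !EVWE !le_max; case: (ord3P i) => ->; rewrite !cycE.
- by apply/orP; left; apply/orP; left; lra.
- by apply/orP; left; apply/orP; right; lra.
- by apply/orP; right; apply/orP; left; lra.
Qed.

Lemma cycle_sum_le_s_odd : 1 + 2 * (\sum_i dVW p i - 2) <= s_odd (EVW p).
Proof. by rewrite s_odd3E sum_ord3 !EVWE !le_max; apply/orP; right; apply/orP; right; lra. Qed.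

Lemma s_odd_le_Pneq S : is_coupling p S -> s_odd (EVW p) - 1 <= 2 * \sum_i Pneq S i.
Proof.
move=> S_cpl; rewrite s_odd3E !EVWE.
have := cycle_le_Pneq S_cpl o0; have := cycle_le_Pneq S_cpl o1.
have := cycle_le_Pneq S_cpl o2; have := cycle_sum_le_Pneq S_cpl.
rewrite sum_ord3 !cycE => *.
by rewrite lerBlDr !ge_max; apply/andP; split; apply/andP; split; lra.
Qed.

Lemma Delta_minE : Delta_min p = 2^-1 * Num.max (2 * Delta0 p) (s_odd (EVW p) - 1).
Proof.
set T := 2^-1 * _.
have [T_ge_Delta0 T_ge_s_odd] : Delta0 p <= T /\ s_odd (EVW p) - 1 <= 2 * T.
  have : 2 * Delta0 p <= Num.max (2 * Delta0 p) (s_odd (EVW p) - 1) /\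
         s_odd (EVW p) - 1 <= Num.max (2 * Delta0 p) (s_odd (EVW p) - 1).
    by rewrite !le_max !lexx !orbT.
  by rewrite /T; lra.
have T_le S : is_coupling p S -> T <= \sum_i Pneq S i.
  move=> S_cpl; suff : Num.max (2 * Delta0 p) (s_odd (EVW p) - 1) <= 2 * \sum_i Pneq S i.
    by rewrite /T; lra.
  rewrite ge_max s_odd_le_Pneq // andbT Delta0E ler_pM2l //.
  by apply: ler_sum => i _; apply: dist_le_Pneq.
have [S [S_cpl S_cost]] : exists S, is_coupling p S /\ \sum_i Pneq S i <= T.
  apply: (coupling_cost_le p_dist); first by rewrite -Delta0E.
    by move=> i; have := cycle_le_s_odd i; lra.
  by have := cycle_sum_le_s_odd; lra.
rewrite /Delta_min; apply/le_anti/andP; split.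
  apply: le_trans S_cost; apply: ge_inf; last by exists S.
  by exists T => _ [S' [S'_cpl ->]]; apply: T_le.
by apply: lb_le_inf => [|_ [S' [S'_cpl ->]]]; [exists (\sum_i Pneq S i), S | apply: T_le].
Qed.

Lemma noncontextual_iff :
  noncontextual p <-> s_odd (EVW p) <= 1 + 2 * \sum_i `|pV p i - pW p i|.
Proof.
rewrite (noncontextualE p_dist); split.
  move=> [S [S_cpl S_le]]; have := s_odd_le_Pneq S_cpl.
  have : \sum_i Pneq S i <= \sum_i `|pV p i - pW p i| by apply: ler_sum => i _; apply: S_le.
  lra.
move=> s_odd_le.
have [S [S_cpl S_cost]] : exists S, is_coupling p S /\ \sum_i Pneq S i <= \sum_i `|pV p i - pW p i|.
  apply: (coupling_cost_le p_dist) => [|i|]; first exact: lexx.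
    by have := cycle_le_s_odd i; lra.
  by have := cycle_sum_le_s_odd; lra.
exists S; split => // i; move: S_cost; rewrite !(sum_ord3_at i).
by have := dist_le_Pneq S_cpl (nxt i); have := dist_le_Pneq S_cpl (prv i); lra.
Qed.

End Main.

Unset Implicit Arguments.

Theorem theorem37 (R : realType) (p : system R)
  (hp : forall i : 'I_3, is_dist (p i)) :
  Delta0 p = 2^-1 * \sum_(i < 3) `|EV p i - EW p i|
  /\ Delta_min p = 2^-1 * Num.max (2 * Delta0 p) (s_odd (EVW p) - 1)
  /\ CNTX p = 2^-1 * Num.max 0 (s_odd (EVW p) - 1 - \sum_(i < 3) `|EV p i - EW p i|)
  /\ (noncontextual p <-> s_odd (EVW p) <= 1 + \sum_(i < 3) `|EV p i - EW p i|).
Proof.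
have sum_EV_EW : \sum_(i < 3) `|EV p i - EW p i| = 2 * \sum_i `|pV p i - pW p i|.
  by rewrite -(Delta0E hp) /Delta0; lra.
split; first by [].
split; first exact: Delta_minE.
split; last by rewrite sum_EV_EW noncontextual_iff.
rewrite /CNTX (Delta_minE hp) (Delta0E hp) sum_EV_EW.
set s := s_odd _; set m := \sum_i _.
by case: (leP (2 * m) (s - 1)) => ?; case: (leP 0 (s - 1 - 2 * m)) => ?; lra.
Qed.
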